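(* Let $\mathcal H$ be a complex Hilbert space and let $T\in\mathcal B(\mathcal H)$ satisfy $\sigma_{ap}(T)\subseteq\partial\mathbb D$ and be such that $T'|_{\mathcal H'_u}$ is hyponormal, where $T'=T(T^*T)^{-1}$ and $\mathcal H'_u:=\bigcap_{n\ge0}\mathcal R(T'^n)$. Then: (i) if $T$ is invertible, then $T$ is unitary; (ii) if $T$ is analytic, then $T$ is completely non-normal.
   Context: $\sigma_{ap}(T)$ is the approximate point spectrum; the condition $\sigma_{ap}(T)\subseteq\partial\mathbb D$ implies $0\notin\sigma_{ap}(T)$, so $T^*T$ is invertible and $T'$ is defined. $\mathcal H'_u$ is invariant under $T'$, and $T'|_{\mathcal H'_u}$ denotes the restriction. $A$ is hyponormal if $A^*A-AA^*\ge0$. $T$ is analytic if $\bigcap_n\mathcal R(T^n)=\{0\}$; completely non-normal if no nonzero closed subspace reduces $T$ to a normal operator. *)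

From mathcomp Require Import all_boot all_algebra.
From mathcomp Require Import boolp reals.
From mathcomp.real_closed Require Export complex.
Import GRing.Theory Num.Theory.
Set Implicit Arguments. Unset Strict Implicit. Unset Printing Implicit Defensive.
Local Open Scope ring_scope.

Section Hilbert.
Variable R : realType.
Local Notation C := R[i].
Variable V : lmodType C.
Variable ip : V -> V -> C.  (* inner product, linear in the first argument *)

Definition inner_product : Prop :=
  [/\ forall (a : C) (x y z : V), ip (a *: x + y) z = a * ip x z + ip y z,
      forall x y, ip y x = (ip x y)^*,
      forall x, 0 <= ip x x
    & forall x, ip x x = 0 -> x = 0].

Definition hnorm (x : V) : R := Num.sqrt (complex.Re (ip x x)).

Definition cvg_to (u : nat -> V) (l : V) : Prop :=
  forall e : R, 0 < e -> exists N, forall n, (N <= n)%N -> hnorm (u n - l) < e.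

Definition cauchy_seq (u : nat -> V) : Prop :=
  forall e : R, 0 < e -> exists N, forall m n, (N <= m)%N -> (N <= n)%N ->
    hnorm (u m - u n) < e.

Definition complete : Prop := forall u, cauchy_seq u -> exists l, cvg_to u l.

Definition lin_op (A : V -> V) : Prop :=
  forall (a : C) (x y : V), A (a *: x + y) = a *: A x + A y.

Definition bounded_op (A : V -> V) : Prop :=
  lin_op A /\ exists M : R, forall x, hnorm (A x) <= M * hnorm x.

Definition is_adjoint (A S : V -> V) : Prop :=
  bounded_op S /\ forall x y, ip (A x) y = ip x (S y).

(* A^* (exists and is unique for A in B(H)) *)
Definition adj (A : V -> V) : V -> V :=
  match pselect (exists S, is_adjoint A S) with
  | left h => proj1_sig (cid h)
  | right _ => A
  end.

Definition is_inverse (A S : V -> V) : Prop :=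
  bounded_op S /\ (forall x, S (A x) = x) /\ (forall x, A (S x) = x).

Definition invertible (A : V -> V) : Prop := exists S, is_inverse A S.

Definition inv_op (A : V -> V) : V -> V :=
  match pselect (exists S, is_inverse A S) with
  | left h => proj1_sig (cid h)
  | right _ => A
  end.

Definition Tprime (T : V -> V) : V -> V := T \o inv_op (adj T \o T).

Definition ap_spectrum (T : V -> V) (lam : C) : Prop :=
  forall e : R, 0 < e -> exists x, hnorm x = 1 /\ hnorm (T x - lam *: x) < e.

(* the restriction A|_M (M invariant under A) is hyponormal:
   (A|_M)^* (A|_M) - (A|_M)(A|_M)^* >= 0, where S plays (A|_M)^* *)
Definition hyponormal_restr (M : V -> Prop) (A : V -> V) : Prop :=
  (forall x, M x -> M (A x)) /\
  exists S : V -> V,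
    (forall x, M x -> M (S x)) /\
    (forall x y, M x -> M y -> ip (A x) y = ip x (S y)) /\
    (forall x, M x -> 0 <= ip (S (A x) - A (S x)) x).

Definition unitary (T : V -> V) : Prop :=
  (forall x, adj T (T x) = x) /\ (forall x, T (adj T x) = x).

Definition closed_subspace (M : V -> Prop) : Prop :=
  M 0 /\ (forall (a : C) x y, M x -> M y -> M (a *: x + y)) /\
  (forall u l, (forall n, M (u n)) -> cvg_to u l -> M l).

Definition reduces (M : V -> Prop) (T : V -> V) : Prop :=
  (forall x, M x -> M (T x)) /\ (forall x, M x -> M (adj T x)).

Definition completely_non_normal (T : V -> V) : Prop :=
  forall M, closed_subspace M -> reduces M T ->
    (forall x, M x -> adj T (T x) = T (adj T x)) ->
    forall x, M x -> x = 0.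

End Hilbert.

Definition Hu {X : Type} (A : X -> X) (y : X) : Prop :=
  forall n : nat, exists x, y = iter n A x.

Definition analytic {R : realType} {V : lmodType R[i]} (T : V -> V) : Prop :=
  forall y, Hu T y -> y = 0.

(* Write A := T' = T (T* T)^-1.  If T is invertible, A is the inverse of T* and H'_u is
   the whole space, so A is hyponormal, hence paranormal, and so is its inverse T*.  A
   paranormal operator B with |B x| > |x| for some x has an approximate eigenvalue of
   modulus > 1: the ratios |B^(k+1) x| / |B^k x| increase to some L > 1, and discrete
   Fourier transforms of the normalised iterates L^-j B^j x are approximate eigenvectors for
   eigenvalues of modulus L.  By hyponormality an approximate eigenvalue mu of A yields the
   approximate eigenvalue 1 / mu^* of T, the inverse of A*, which lies on the unit circle.
   Hence neither A nor its inverse T* expands any vector, A is an isometry, and T is unitary.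
   If T is analytic, 0 is not an approximate eigenvalue, so T is bounded below.  If a closed
   subspace M reduces T to a normal operator, then T M is closed and its orthogonal
   complement in M lies in ker T* = ker T, so T maps M onto M and M is contained in the
   intersection of the ranges of the T^n, which is {0}. *)

From mathcomp Require Import all_boot all_order all_algebra.
From mathcomp Require Import boolp classical_sets reals.
From mathcomp.real_closed Require Import complex.
From mathcomp Require Import ring lra.
From mathcomp Require cyclic separable cyclotomic.
Import Order.TTheory GRing.Theory Num.Theory Normc.
Set Implicit Arguments. Unset Strict Implicit. Unset Printing Implicit Defensive.
Local Open Scope ring_scope.
Local Notation "x %:C" := (x%:C)%C : ring_scope.

(** * Complex moduli, inner products and norms *)

Lemma exists_inv_lt (R : realType) (e : R) : 0 < e -> exists k : nat, k.+1%:R^-1 < e.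
Proof. by move=> /ltr_add_invr[k]; rewrite add0r; exists k. Qed.

Section ComplexModulus.
Variable R : realType.
Implicit Types (r : R) (z w : R[i]).

Lemma ReD z w : complex.Re (z + w) = complex.Re z + complex.Re w.
Proof. by case: z; case: w. Qed.

Lemma ReN z : complex.Re (- z) = - complex.Re z.
Proof. by case: z. Qed.

Lemma Re_mul z w :
  complex.Re (z * w) = complex.Re z * complex.Re w - complex.Im z * complex.Im w.
Proof. by case: z; case: w. Qed.

Lemma ReJ z : complex.Re z^* = complex.Re z.
Proof. by case: z. Qed.

Lemma ImJ z : complex.Im z^* = - complex.Im z.
Proof. by case: z. Qed.

Lemma conjC_real r : r%:C^* = r%:C.
Proof. exact: conjc_real. Qed.

Lemma conjCX z n : (z ^+ n)^* = z^* ^+ n.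
Proof. exact: rmorphXn. Qed.

Lemma Re_realM r z : complex.Re (r%:C * z) = r * complex.Re z.
Proof. by rewrite Re_mul /= mul0r subr0. Qed.

Lemma Re_natM n z : complex.Re (n%:R * z) = n%:R * complex.Re z.
Proof. by elim: n => [|n IH]; rewrite ?mul0r // -!natr1 !mulrDl ReD IH !mul1r. Qed.

Lemma Re_sum (I : Type) (s : seq I) (F : I -> R[i]) :
  complex.Re (\sum_(i <- s) F i) = \sum_(i <- s) complex.Re (F i).
Proof. by elim: s => [|i s IH]; rewrite ?big_nil // !big_cons ReD IH. Qed.

Lemma normc_ge0 z : 0 <= normc z.
Proof. by case: z => a b; apply: sqrtr_ge0. Qed.

Lemma normc_gt0 z : (0 < normc z) = (z != 0).
Proof.
rewrite lt_neqAle normc_ge0 andbT eq_sym; congr (~~ _).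
by apply/eqP/eqP => [/eq0_normc|->]; rewrite ?normc0.
Qed.

Lemma normc_sqrE z : normc z ^+ 2 = complex.Re z ^+ 2 + complex.Im z ^+ 2.
Proof. by case: z => a b; rewrite /= sqr_sqrtr // addr_ge0 // sqr_ge0. Qed.

Lemma normc_conj z : normc z^* = normc z.
Proof. by case: z => a b; rewrite /= sqrrN. Qed.

Lemma normc_real r : normc r%:C = `|r|.
Proof. by rewrite /= expr0n addr0 sqrtr_sqr. Qed.

Lemma normcX z n : normc (z ^+ n) = normc z ^+ n.
Proof. by elim: n => [|n IH]; rewrite ?normc1 // !exprS normcM IH. Qed.

Lemma normr_normc z : `|z| = (normc z)%:C.
Proof. by case: z. Qed.

Lemma normr_eq1 z : (`|z| == 1) = (normc z == 1).
Proof. by rewrite normr_normc eq_complex /= eqxx andbT. Qed.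

Lemma normc_sqr z : (normc z ^+ 2)%:C = z * z^*.
Proof. by rewrite -normCK normr_normc rmorphXn. Qed.

Lemma normc_root1 z n : (0 < n)%N -> z ^+ n = 1 -> normc z = 1.
Proof.
move=> n_gt0 zn1; have : normc z ^+ n == 1 by rewrite -normcX zn1 normc1.
by rewrite pexprn_eq1 ?normc_ge0 // eqn0Ngt n_gt0 => /eqP.
Qed.

Lemma normc1_conjM z : normc z = 1 -> z^* * z = 1.
Proof. by move=> z1; rewrite mulrC -normc_sqr z1 expr1n. Qed.

End ComplexModulus.

Section InnerProduct.
Variable R : realType.
Variable V : lmodType R[i].
Variable ip : V -> V -> R[i].
Hypothesis hip : inner_product ip.
Implicit Types (a : R[i]) (x y z : V).

Lemma ipL a x y z : ip (a *: x + y) z = a * ip x z + ip y z.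
Proof. by case: hip => h _ _ _; apply: h. Qed.

Lemma ipC x y : ip y x = (ip x y)^*.
Proof. by case: hip => _ h _ _; apply: h. Qed.

Lemma ipxx_ge0 x : 0 <= ip x x.
Proof. by case: hip => _ _ h _; apply: h. Qed.

Lemma ipxx_eq0 x : ip x x = 0 -> x = 0.
Proof. by case: hip => _ _ _ h; apply: h. Qed.

Lemma ip0l z : ip 0 z = 0.
Proof.
have h := ipL 1 0 0 z; rewrite scaler0 addr0 mul1r in h.
by apply: (addrI (ip 0 z)); rewrite addr0 -h.
Qed.

Lemma ipDl x y z : ip (x + y) z = ip x z + ip y z.
Proof. by rewrite -{1}[x]scale1r ipL mul1r. Qed.

Lemma ipZl a x z : ip (a *: x) z = a * ip x z.
Proof. by rewrite -[a *: x]addr0 ipL ip0l addr0. Qed.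

Lemma ipNl x z : ip (- x) z = - ip x z.
Proof. by rewrite -scaleN1r ipZl mulN1r. Qed.

Lemma ipBl x y z : ip (x - y) z = ip x z - ip y z.
Proof. by rewrite ipDl ipNl. Qed.

Lemma ip0r z : ip z 0 = 0.
Proof. by rewrite ipC ip0l conjC0. Qed.

Lemma ipDr x y z : ip z (x + y) = ip z x + ip z y.
Proof. by rewrite ipC ipDl rmorphD /= -!ipC. Qed.

Lemma ipZr a x z : ip z (a *: x) = a^* * ip z x.
Proof. by rewrite ipC ipZl rmorphM /= -ipC. Qed.

Lemma ipNr x z : ip z (- x) = - ip z x.
Proof. by rewrite ipC ipNl rmorphN /= -ipC. Qed.

Lemma ipBr x y z : ip z (x - y) = ip z x - ip z y.
Proof. by rewrite ipDr ipNr. Qed.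

Lemma ip_suml (I : Type) (s : seq I) (F : I -> V) z :
  ip (\sum_(i <- s) F i) z = \sum_(i <- s) ip (F i) z.
Proof. by elim: s => [|i s IH]; rewrite ?big_nil ?ip0l // !big_cons ipDl IH. Qed.

Lemma ip_sumr (I : Type) (s : seq I) (F : I -> V) z :
  ip z (\sum_(i <- s) F i) = \sum_(i <- s) ip z (F i).
Proof. by elim: s => [|i s IH]; rewrite ?big_nil ?ip0r // !big_cons ipDr IH. Qed.

Lemma Re_ipC x y : complex.Re (ip y x) = complex.Re (ip x y).
Proof. by rewrite ipC ReJ. Qed.

Lemma ip_inj_r x y : (forall z, ip z x = ip z y) -> x = y.
Proof. by move=> h; apply/subr0_eq/ipxx_eq0; rewrite ipBr h subrr. Qed.

Definition sqnorm x : R := complex.Re (ip x x).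

Lemma ipxxE x : ip x x = (sqnorm x)%:C.
Proof. exact/esym/RRe_real/ger0_real/ipxx_ge0. Qed.

Lemma sqnorm_ge0 x : 0 <= sqnorm x.
Proof. by rewrite -lecR -ipxxE ipxx_ge0. Qed.

Lemma sqnorm_eq0 x : sqnorm x = 0 -> x = 0.
Proof. by move=> h; apply: ipxx_eq0; rewrite ipxxE h. Qed.

Lemma Re_ip_inj_r x y : (forall z, complex.Re (ip z x) = complex.Re (ip z y)) -> x = y.
Proof. by move=> h; apply/subr0_eq/sqnorm_eq0; rewrite /sqnorm ipBr ReD ReN h subrr. Qed.

Lemma sqnorm0 : sqnorm 0 = 0.
Proof. by rewrite /sqnorm ip0l. Qed.

Lemma sqnormD x y : sqnorm (x + y) = sqnorm x + sqnorm y + 2 * complex.Re (ip x y).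
Proof. by rewrite /sqnorm ipDl !ipDr !ReD (Re_ipC x y); lra. Qed.

Lemma sqnormN x : sqnorm (- x) = sqnorm x.
Proof. by rewrite /sqnorm ipNl ipNr opprK. Qed.

Lemma sqnormB x y : sqnorm (x - y) = sqnorm x + sqnorm y - 2 * complex.Re (ip x y).
Proof. by rewrite sqnormD sqnormN ipNr ReN mulrN. Qed.

Lemma sqnormZ a x : sqnorm (a *: x) = normc a ^+ 2 * sqnorm x.
Proof. by rewrite /sqnorm ipZl ipZr mulrA -normc_sqr ipxxE -rmorphM. Qed.

Local Notation N := (hnorm ip).

Lemma hnorm_ge0 x : 0 <= N x.
Proof. exact: sqrtr_ge0. Qed.

Lemma hnorm_sqr x : N x ^+ 2 = sqnorm x.
Proof. by rewrite sqr_sqrtr // sqnorm_ge0. Qed.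

Lemma hnorm0 : N 0 = 0.
Proof. by rewrite /hnorm ip0l sqrtr0. Qed.

Lemma hnorm_eq0 x : N x = 0 -> x = 0.
Proof. by move=> h; apply: sqnorm_eq0; rewrite -hnorm_sqr h expr0n. Qed.

Lemma hnorm_gt0 x : x != 0 -> 0 < N x.
Proof.
move=> x0; rewrite lt_neqAle hnorm_ge0 andbT eq_sym.
by apply: contra x0 => /eqP/hnorm_eq0 ->.
Qed.

Lemma hnormZ a x : N (a *: x) = normc a * N x.
Proof.
by rewrite /hnorm -/(sqnorm _) sqnormZ sqrtrM ?sqr_ge0 // sqrtr_sqr ger0_norm ?normc_ge0.
Qed.

Lemma hnorm_opp x : N (- x) = N x.
Proof. by rewrite /hnorm -!/(sqnorm _) sqnormN. Qed.

Lemma hnormBC x y : N (x - y) = N (y - x).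
Proof. by rewrite -hnorm_opp opprB. Qed.

Lemma ler_hnorm x y : sqnorm x <= sqnorm y -> N x <= N y.
Proof. by move=> h; rewrite /hnorm ler_sqrt // sqnorm_ge0. Qed.

Lemma Re_ip_le x y : complex.Re (ip x y) <= N x * N y.
Proof.
have [->|x0] := eqVneq x 0; first by rewrite ip0l hnorm0 mul0r.
have [->|y0] := eqVneq y 0; first by rewrite ip0r hnorm0 mulr0.
have := sqnorm_ge0 ((N y)%:C *: x - (N x)%:C *: y).
rewrite sqnormB !sqnormZ !normc_real ipZl ipZr conjC_real mulrA -rmorphM Re_realM.
rewrite !ger0_norm ?hnorm_ge0 // -!hnorm_sqr.
have hx := hnorm_gt0 x0; have hy := hnorm_gt0 y0.
set a := N x; set b := N y; set c := complex.Re _ => h.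
have hab : 0 < a * b by rewrite mulr_gt0.
have : 0 <= (a * b) * (a * b - c) by nra.
by rewrite pmulr_rge0 // subr_ge0.
Qed.

(* Cauchy-Schwarz follows from its real part by rotating [x] with the phase of [ip x y]. *)
Lemma normc_ip_le x y : normc (ip x y) <= N x * N y.
Proof.
set c := ip x y; have [c0|c0] := eqVneq c 0.
  by rewrite c0 normc0 mulr_ge0 ?hnorm_ge0.
have nc0 : normc c != 0 by rewrite -normc_gt0 in c0; rewrite gt_eqF.
pose u := c^* / (normc c)%:C.
have nu : normc u = 1 by rewrite normcM normcV normc_conj normc_real ger0_norm ?normc_ge0 // mulfV.
have := Re_ip_le (u *: x) y; rewrite ipZl hnormZ nu mul1r.
suff -> : u * c = (normc c)%:C by [].
rewrite /u mulrAC [c^* * c]mulrC -normc_sqr expr2 rmorphM -mulrA mulfV ?mulr1 //.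
by apply: contra nc0 => /eqP[] /eqP.
Qed.

Lemma ler_hnormD x y : N (x + y) <= N x + N y.
Proof.
rewrite -(ler_pXn2r (n := 2)) ?nnegrE ?addr_ge0 ?hnorm_ge0 //.
rewrite hnorm_sqr sqnormD -!hnorm_sqr sqrrD.
have := Re_ip_le x y; nra.
Qed.

Lemma ler_hnormB x y : N (x - y) <= N x + N y.
Proof. by rewrite -(hnorm_opp y) ler_hnormD. Qed.

Lemma hnorm_trans x y z : N (x - z) <= N (x - y) + N (y - z).
Proof. by have := ler_hnormD (x - y) (y - z); rewrite addrA subrK. Qed.

End InnerProduct.

(** * Orthogonal projection, Riesz representation and adjoints *)

Section LinearMap.
Variables (K : pzRingType) (U W : lmodType K) (f : U -> W).
Hypothesis hf : forall a x y, f (a *: x + y) = a *: f x + f y.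

Lemma lin_op0 : f 0 = 0.
Proof.
have h := hf 1 0 0; rewrite scaler0 addr0 scale1r in h.
by apply: (addrI (f 0)); rewrite addr0 -h.
Qed.

Lemma lin_opD x y : f (x + y) = f x + f y.
Proof. by rewrite -{1}[x]scale1r hf scale1r. Qed.

Lemma lin_opZ a x : f (a *: x) = a *: f x.
Proof. by rewrite -[a *: x]addr0 hf lin_op0 addr0. Qed.

Lemma lin_opN x : f (- x) = - f x.
Proof. by rewrite -scaleN1r lin_opZ scaleN1r. Qed.

Lemma lin_opB x y : f (x - y) = f x - f y.
Proof. by rewrite lin_opD lin_opN. Qed.

End LinearMap.

Section Convergence.
Variable R : realType.
Variable V : lmodType R[i].
Variable ip : V -> V -> R[i].
Hypothesis hip : inner_product ip.
Local Notation N := (hnorm ip).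

Lemma bounded_op_pos T : bounded_op ip T ->
  exists2 M : R, 0 < M & forall x, N (T x) <= M * N x.
Proof.
case=> _ [M hM]; exists (`|M| + 1) => [|x]; first by rewrite ltr_wpDl.
apply: le_trans (hM x) _; rewrite ler_wpM2r ?hnorm_ge0 //.
by rewrite (le_trans (ler_norm M)) // lerDl.
Qed.

Lemma bounded_op_comp S T : bounded_op ip S -> bounded_op ip T -> bounded_op ip (S \o T).
Proof.
move=> hS hT; split=> [a x y|] /=; first by rewrite hT.1 hS.1.
have [MS MS0 hMS] := bounded_op_pos hS; have [MT MT0 hMT] := bounded_op_pos hT.
exists (MS * MT) => x /=; apply: le_trans (hMS _) _.
by rewrite -mulrA ler_wpM2l ?hMT // ltW.
Qed.

Lemma cvg_to_unique u l l' : cvg_to ip u l -> cvg_to ip u l' -> l = l'.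
Proof.
move=> hl hl'; apply/subr0_eq/(hnorm_eq0 hip)/eqP; rewrite eq_le hnorm_ge0 andbT.
apply/ler_addgt0Pr => e e0; rewrite add0r.
have [K hK] := hl _ (divr_gt0 e0 (ltr0Sn R 1)); have [K' hK'] := hl' _ (divr_gt0 e0 (ltr0Sn R 1)).
have := hK _ (leq_maxl K K'); have := hK' _ (leq_maxr K K').
have := hnorm_trans hip l (u (maxn K K')) l'; rewrite (hnormBC hip l (u _)); lra.
Qed.

Lemma cvg_to_cauchy u l : cvg_to ip u l -> cauchy_seq ip u.
Proof.
move=> h e e0; have [K hK] := h _ (divr_gt0 e0 (ltr0Sn R 1)).
exists K => m n hm hn; have := hK m hm; have := hK n hn.
have := hnorm_trans hip (u m) l (u n); rewrite (hnormBC hip l); lra.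
Qed.

Lemma cvg_to_bounded_op T u l : bounded_op ip T -> cvg_to ip u l -> cvg_to ip (T \o u) (T l).
Proof.
move=> hT hu e e0; have [M M0 hM] := bounded_op_pos hT.
have [K hK] := hu _ (divr_gt0 e0 M0); exists K => n hn /=.
by rewrite -(lin_opB hT.1); apply: le_lt_trans (hM _) _; rewrite -ltr_pdivlMl // mulrC hK.
Qed.

Lemma cauchy_seq_sqnorm u (M : R) :
  (forall m n, sqnorm ip (u m - u n) <= M / m.+1%:R + M / n.+1%:R) -> cauchy_seq ip u.
Proof.
move=> hu e e0; pose M' := `|M| + 1; have M'0 : 0 < M' by rewrite ltr_wpDl.
have [K hK] := exists_inv_lt (divr_gt0 (exprn_gt0 2 e0) (mulr_gt0 (ltr0Sn R 1) M'0)).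
have small k : (K <= k)%N -> M / k.+1%:R < e ^+ 2 / 2.
  move=> Kk; apply: (@le_lt_trans _ _ (M' / K.+1%:R)).
    apply: (@le_trans _ _ (M' / k.+1%:R)).
      by rewrite ler_pM2r ?invr_gt0 ?ltr0Sn // (le_trans (ler_norm M)) // lerDl.
    by rewrite ler_pM2l // lef_pV2 ?posrE ?ltr0Sn // ler_nat ltnS.
  have -> : e ^+ 2 / 2 = M' * (e ^+ 2 / (2 * M')) by field; rewrite gt_eqF.
  by rewrite ltr_pM2l.
exists K => m n hm hn.
rewrite -(ltr_pXn2r (n := 2)) ?nnegrE ?hnorm_ge0 ?ltW // hnorm_sqr //.
by apply: le_lt_trans (hu m n) _; rewrite [X in _ < X]splitr ltrD ?small.
Qed.

End Convergence.

Section Projection.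
Variable R : realType.
Variable V : lmodType R[i].
Variable ip : V -> V -> R[i].
Hypothesis hip : inner_product ip.
Hypothesis hcomp : complete ip.
Local Notation N := (hnorm ip).
Local Notation sqnorm := (sqnorm ip).

Lemma parallelogram x y : sqnorm (x + y) + sqnorm (x - y) = 2 * sqnorm x + 2 * sqnorm y.
Proof. by rewrite (sqnormD hip) (sqnormB hip); lra. Qed.

Lemma ip_eq0_of_min z n : (forall t, sqnorm z <= sqnorm (z - t *: n)) -> ip z n = 0.
Proof.
move=> hmin; have [->|n0] := eqVneq n 0; first by rewrite (ip0r hip).
set c := ip z n; set m := sqnorm n.
have m0 : 0 < m by rewrite /m -(hnorm_sqr hip) exprn_gt0 // (hnorm_gt0 hip).
have := hmin (c / m%:C); rewrite (sqnormB hip) (sqnormZ hip) (ipZr hip) -/c -/m.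
have -> : (c / m%:C)^* * c = (normc c ^+ 2 / m)%:C.
  by rewrite rmorphM fmorphV /= conjC_real mulrAC [_ * c]mulrC -normc_sqr -fmorphV -rmorphM.
rewrite normcM normcV normc_real (ger0_norm (ltW m0)) /=.
have -> : (normc c * m^-1) ^+ 2 * m = normc c ^+ 2 / m by field; rewrite gt_eqF.
move=> h; have : normc c ^+ 2 / m <= 0 by lra.
rewrite pmulr_lle0 ?invr_gt0 // => hc; apply/eqP/negPn; rewrite -normc_gt0 -leNgt.
by rewrite -(ler_pXn2r (n := 2)) ?nnegrE ?normc_ge0 // expr0n.
Qed.

Variable P : V -> Prop.
Hypothesis hP : closed_subspace ip P.

Lemma subspace0 : P 0.
Proof. by case: hP. Qed.

Lemma subspaceL a x y : P x -> P y -> P (a *: x + y).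
Proof. by case: hP => _ [h _]; apply: h. Qed.

Lemma subspaceD x y : P x -> P y -> P (x + y).
Proof. by move=> Px Py; rewrite -[x]scale1r; apply: subspaceL. Qed.

Lemma subspaceZ a x : P x -> P (a *: x).
Proof. by move=> Px; rewrite -[a *: x]addr0; apply: subspaceL Px subspace0. Qed.

Lemma subspaceB x y : P x -> P y -> P (x - y).
Proof. by move=> Px Py; have := subspaceL (-1) Py Px; rewrite scaleN1r addrC. Qed.

Lemma subspace_lim u l : (forall n, P (u n)) -> cvg_to ip u l -> P l.
Proof. by case: hP => _ [_ h]; apply: h. Qed.

(* Near-minimisers of the distance to [w] are close to each other, by the parallelogram law
   for [w - x] and [w - y]. *)
Lemma sqnormB_near_min w x y (d s t : R) : 0 <= d -> 0 <= s <= 1 -> 0 <= t <= 1 ->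
  d <= N (w - (2^-1)%:C *: (x + y)) -> N (w - x) <= d + s -> N (w - y) <= d + t ->
  sqnorm (x - y) <= 2 * (2 * d + 1) * (s + t).
Proof.
move=> d0 /andP[s0 s1] /andP[t0 t1] hmid hx hy.
have := parallelogram (w - x) (w - y).
have -> : w - x + (w - y) = 2%:C *: (w - (2^-1)%:C *: (x + y)).
  rewrite scalerBr scalerA -rmorphM mulfV ?pnatr_eq0 // scale1r.
  by rewrite rmorph_nat scaler_nat mulr2n addrACA opprD.
have -> : w - x - (w - y) = - (x - y) by rewrite [RHS]opprB opprB addrC addrA subrK.
rewrite (sqnormZ hip) (sqnormN hip) normc_real ger0_norm // -!(hnorm_sqr hip).
have := hnorm_ge0 ip (w - x); have := hnorm_ge0 ip (w - y); nra.
Qed.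

Theorem orthogonal_projection w : exists2 p, P p & forall n, P n -> ip (w - p) n = 0.
Proof.
pose D := [set N (w - n) | n in P]%classic.
have D0 : D (N (w - 0)) by exists 0 => //; exact: subspace0.
have hD : has_lbound D by exists 0 => _ [n _ <-]; apply: hnorm_ge0.
set d := inf D.
have d0 : 0 <= d by apply: lb_le_inf; [exists (N (w - 0)) | move=> _ [n _ <-]; apply: hnorm_ge0].
have le_d n : P n -> d <= N (w - n) by move=> Pn; apply: ge_inf => //; exists n.
have near_d k : exists n, P n /\ N (w - n) < d + k.+1%:R^-1.
  have ek : 0 < k.+1%:R^-1 :> R by rewrite invr_gt0 ltr0Sn.
  have [_ [n Pn <-]] := inf_adherent ek (conj (ex_intro _ _ D0) hD).
  by exists n.
have [f hf] := choice near_d.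
have ek0 k : 0 <= (k.+1%:R^-1 : R) <= 1 by rewrite invr_ge0 ler0n invf_le1 ?ltr0Sn // ler1n.
have f_cauchy : cauchy_seq ip f.
  apply: (@cauchy_seq_sqnorm _ _ _ hip f (2 * (2 * d + 1))) => m n.
  have [Pm hm] := hf m; have [Pn hn] := hf n.
  rewrite -mulrDr; apply: sqnormB_near_min (ltW hm) (ltW hn) => //.
  by apply: le_d; apply/subspaceZ/subspaceD.
have [p hp] := hcomp f_cauchy.
have Pp : P p by apply: subspace_lim hp => n; case: (hf n).
exists p => // n Pn; apply: ip_eq0_of_min => t.
have hpd : N (w - p) <= d.
  apply/ler_addgt0Pr => e e0.
  have [K hK] := hp _ (divr_gt0 e0 (ltr0Sn R 1)).
  have [k hk] := exists_inv_lt (divr_gt0 e0 (ltr0Sn R 1)).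
  pose j := maxn K k; have [_ hj] := hf j.
  have hjk : d + j.+1%:R^-1 <= d + e / 2.
    by rewrite lerD2l (le_trans _ (ltW hk)) // lef_pV2 ?posrE ?ltr0Sn // ler_nat ltnS leq_maxr.
  have := lt_le_trans hj hjk; have := hK j (leq_maxl _ _).
  have := hnorm_trans hip w (f j) p; lra.
have := le_d (p + t *: n) (subspaceD Pp (subspaceZ t Pn)).
rewrite opprD addrA => h; rewrite -!(hnorm_sqr hip) ler_pXn2r ?nnegrE ?(hnorm_ge0 ip) //.
exact: le_trans hpd h.
Qed.

End Projection.

Section Adjoint.
Variable R : realType.
Variable V : lmodType R[i].
Variable ip : V -> V -> R[i].
Hypothesis hip : inner_product ip.
Hypothesis hcomp : complete ip.
Local Notation N := (hnorm ip).

Lemma bounded_functional_pos (f : V -> R[i]) (M : R) : (forall x, normc (f x) <= M * N x) ->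
  exists2 M' : R, 0 < M' & forall x, normc (f x) <= M' * N x.
Proof.
move=> hM; exists (`|M| + 1) => [|x]; first by rewrite ltr_wpDl.
by apply: le_trans (hM x) _; rewrite ler_wpM2r ?hnorm_ge0 // (le_trans (ler_norm M)) // lerDl.
Qed.

(* The representing vector is a multiple of any nonzero [z] orthogonal to [ker f]. *)
Theorem riesz_representation (f : V -> R[i]^o) (M : R) :
  (forall a x y, f (a *: x + y) = a *: f x + f y) ->
  (forall x, normc (f x) <= M * N x) -> exists s, forall x, f x = ip x s.
Proof.
move=> hf /bounded_functional_pos[{}M M0 hM].
have [[w fw0]|f0] := pselect (exists w, f w != 0); last first.
  by exists 0 => x; rewrite (ip0r hip); apply/eqP/negPn/negP => fx; apply: f0; exists x.
pose P x := f x = 0.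
have hP : closed_subspace ip P.
  split; first exact: lin_op0 hf.
  split=> [a x y Px Py|u l Pu ul]; first by rewrite /P hf Px Py scaler0 addr0.
  apply/eqP/negPn/negP; rewrite -normc_gt0 => fl0.
  have [K hK] := ul _ (divr_gt0 fl0 M0).
  have := hM (l - u K); rewrite (lin_opB hf) Pu subr0 (hnormBC hip) => hle.
  by move: (hK K (leqnn K)); rewrite -(ltr_pM2l M0) mulrCA mulfV ?gt_eqF // mulr1 ltNge hle.
have [p Pp hp] := orthogonal_projection hip hcomp hP w.
set z := w - p.
have fz : f z = f w by rewrite /z (lin_opB hf) Pp subr0.
have z0 : sqnorm ip z != 0.
  apply: contra fw0 => /eqP/(sqnorm_eq0 hip) z0; by rewrite -fz z0 (lin_op0 hf).
exists (((f z)^* / (sqnorm ip z)%:C) *: z) => x.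
have Pu : P (f x *: z - f z *: x).
  by rewrite /P (lin_opB hf) !(lin_opZ hf); apply/eqP; rewrite subr_eq0; apply/eqP/mulrC.
have hu : ip (f x *: z - f z *: x) z = 0 by rewrite (ipC hip) hp // conjC0.
move: hu; rewrite (ipBl hip) !(ipZl hip) (ipxxE hip) => /eqP; rewrite subr_eq0 => /eqP hu.
rewrite (ipZr hip) rmorphM /= conjCK fmorphV /= conjC_real mulrAC -hu mulfK //.
by apply: contra z0 => /eqP[] /eqP.
Qed.

Variable T : V -> V.
Hypothesis hT : bounded_op ip T.

Lemma adjoint_exists : exists S, is_adjoint ip T S.
Proof.
have [M M0 hM] := bounded_op_pos hT.
have riesz y : exists s, forall x, ip (T x) y = ip x s.
  apply: (riesz_representation (f := fun x => ip (T x) y : R[i]^o) (M := M * N y)).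
    by move=> a x x'; rewrite /= hT.1 (ipL hip).
  move=> x; rewrite mulrAC; apply: le_trans (normc_ip_le hip _ _) _.
  by rewrite ler_wpM2r ?hnorm_ge0.
have [S hS] := choice riesz.
have hlS : lin_op S.
  move=> a x y; apply: (ip_inj_r hip) => v.
  by rewrite -hS (ipDr hip) (ipZr hip) !hS (ipDr hip) (ipZr hip).
exists S; split=> //; split=> //; exists M => y.
have : N (S y) ^+ 2 <= M * N (S y) * N y.
  rewrite (hnorm_sqr hip) /sqnorm -hS; apply: le_trans (Re_ip_le hip _ _) _.
  by rewrite ler_wpM2r ?hnorm_ge0.
have [->|Sy0] := eqVneq (S y) 0.
  by rewrite (hnorm0 hip) => _; rewrite mulr_ge0 ?hnorm_ge0 ?(ltW M0).
by rewrite expr2 mulrAC ler_pM2r ?(hnorm_gt0 hip).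
Qed.

Lemma adjP : is_adjoint ip T (adj ip T).
Proof.
rewrite /adj; case: pselect => [h|h] /=; first exact: (proj2_sig (cid h)).
by have := adjoint_exists.
Qed.

Lemma ip_adjr x y : ip (T x) y = ip x (adj ip T y).
Proof. by case: adjP => _; apply. Qed.

Lemma ip_adjl x y : ip (adj ip T x) y = ip x (T y).
Proof. by rewrite (ipC hip) -ip_adjr -(ipC hip). Qed.

Lemma adj_bounded : bounded_op ip (adj ip T).
Proof. by case: adjP. Qed.

End Adjoint.

Lemma inv_opE (R : realType) (V : lmodType R[i]) (ip : V -> V -> R[i]) A S :
  is_inverse ip A S -> inv_op ip A =1 S.
Proof.
move=> hS y; rewrite /inv_op; case: pselect => [h|hn]; last by case: hn; exists S.
have [_ [SA _]] := proj2_sig (cid h); have [_ [_ AS]] := hS.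
by rewrite -[in LHS](AS y) SA.
Qed.

(** * Approximate spectrum and completely non-normal operators *)

Section ApproximateSpectrum.
Variable R : realType.
Variable V : lmodType R[i].
Variable ip : V -> V -> R[i].
Hypothesis hip : inner_product ip.
Local Notation N := (hnorm ip).

Lemma ap_spectrumP T lam : lin_op T -> ap_spectrum ip T lam <->
  forall e, 0 < e -> exists2 x, x != 0 & N (T x - lam *: x) < e * N x.
Proof.
move=> hT; split=> [h e e0|h e e0].
  have [x [x1 hx]] := h e e0; exists x; last by rewrite x1 mulr1.
  by apply/eqP => x0; move: x1; rewrite x0 (hnorm0 hip) => /eqP; rewrite eq_sym oner_eq0.
have [x x0 hx] := h e e0; have Nx0 := hnorm_gt0 hip x0.
exists ((N x)^-1%:C *: x); split.
  by rewrite (hnormZ hip) normc_real ger0_norm ?invr_ge0 ?ltW // mulVf ?gt_eqF.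
rewrite (lin_opZ hT) scalerA mulrC -scalerA -scalerBr (hnormZ hip) normc_real.
by rewrite ger0_norm ?invr_ge0 ?ltW // mulrC ltr_pdivrMr.
Qed.

Lemma bounded_below_of_not_ap T lam : lin_op T -> ~ ap_spectrum ip T lam ->
  exists2 e, 0 < e & forall x, e * N x <= N (T x - lam *: x).
Proof.
move=> hT hn; apply: contrapT => hc; apply/hn/ap_spectrumP => // e e0.
apply: contrapT => hx; apply: hc; exists e => // x; rewrite leNgt; apply/negP => hlt.
apply: hx; exists x => //; apply: contraTneq hlt => ->.
by rewrite (hnorm0 hip) mulr0 scaler0 subr0 (lin_op0 hT) (hnorm0 hip) ltxx.
Qed.

Lemma ap_spectrum_left_inverse B B' lam : lin_op B -> bounded_op ip B' ->
  (forall x, B' (B x) = x) -> lam != 0 -> ap_spectrum ip B lam -> ap_spectrum ip B' lam^-1.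
Proof.
move=> hB hB' BK lam0 /(ap_spectrumP _ hB) hap; apply/(ap_spectrumP _ hB'.1) => e e0.
have [M M0 hM] := bounded_op_pos hB'; have nl : 0 < normc lam by rewrite normc_gt0.
have [w w0 hw] := hap _ (divr_gt0 (mulr_gt0 e0 nl) M0); exists w => //.
have -> : B' w - lam^-1 *: w = - lam^-1 *: B' (B w - lam *: w).
  rewrite (lin_opB hB'.1) (lin_opZ hB'.1) BK scalerBr scalerA mulNr mulVf // scaleN1r.
  by rewrite opprK scaleNr addrC.
rewrite (hnormZ hip) normcN normcV -(ltr_pM2l nl) mulrA mulfV ?gt_eqF // mul1r.
apply: le_lt_trans (hM _) _.
have -> : normc lam * (e * N w) = M * (e * normc lam / M * N w) by field; rewrite gt_eqF.
by rewrite ltr_pM2l.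
Qed.

Definition paranormal (B : V -> V) := forall y, N (B y) ^+ 2 <= N (B (B y)) * N y.

Lemma paranormal_inverse B B' : paranormal B -> (forall y, B (B' y) = y) -> paranormal B'.
Proof. by move=> hB BK y; have := hB (B' (B' y)); rewrite !BK mulrC. Qed.

Section Hyponormal.
Variables A S : V -> V.
Hypothesis adjAS : forall x y, ip (A x) y = ip x (S y).
Hypothesis hypoAS : forall x, N (S x) <= N (A x).

Lemma hyponormal_paranormal : paranormal A.
Proof.
move=> y; rewrite (hnorm_sqr hip) /sqnorm adjAS.
apply: le_trans (Re_ip_le hip _ _) _.
by rewrite mulrC ler_wpM2r ?hnorm_ge0 ?hypoAS.
Qed.

Lemma hyponormal_shift mu x : N (S x - mu^* *: x) <= N (A x - mu *: x).
Proof.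
apply: ler_hnorm => //; rewrite !(sqnormB hip) !(sqnormZ hip) normc_conj !(ipZr hip) conjCK.
have -> : ip (A x) x = (ip (S x) x)^* by rewrite adjAS -(ipC hip).
rewrite -rmorphM /= ReJ -!(hnorm_sqr hip).
have := hypoAS x; have := hnorm_ge0 ip (S x); nra.
Qed.

Lemma ap_spectrum_hyponormal_adj mu : ap_spectrum ip A mu -> ap_spectrum ip S mu^*.
Proof.
move=> hA e e0; have [x [x1 hx]] := hA e e0.
by exists x; split=> //; apply: le_lt_trans (hyponormal_shift mu x) hx.
Qed.

End Hyponormal.

End ApproximateSpectrum.

Section CompletelyNonNormal.
Variable R : realType.
Variable V : lmodType R[i].
Variable ip : V -> V -> R[i].
Hypothesis hip : inner_product ip.
Hypothesis hcomp : complete ip.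
Local Notation N := (hnorm ip).
Variable T : V -> V.
Hypothesis hT : bounded_op ip T.
Variable e : R.
Hypothesis e0 : 0 < e.
Hypothesis T_bounded_below : forall x, e * N x <= N (T x).

Lemma image_closed_subspace M : closed_subspace ip M ->
  closed_subspace ip (fun u => exists x, M x /\ u = T x).
Proof.
move=> hM; split; first by exists 0; rewrite (lin_op0 hT.1); split=> //; apply: subspace0 hM.
split=> [a _ _ [x [Mx ->]] [y [My ->]]|u l hu ul].
  exists (a *: x + y); rewrite hT.1; split=> //.
  exact: (subspaceL hM a Mx My).
have [xs hxs] := choice hu.
have xs_cauchy : cauchy_seq ip xs.
  move=> eps eps0; have [K hK] := cvg_to_cauchy hip ul (mulr_gt0 eps0 e0).
  exists K => m n hm hn; have [_ um] := hxs m; have [_ un] := hxs n.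
  rewrite -(ltr_pM2l e0); apply: le_lt_trans (T_bounded_below _) _.
  by rewrite (lin_opB hT.1) -um -un mulrC hK.
have [x hx] := hcomp xs_cauchy; exists x; split.
  by apply: (subspace_lim hM _ hx) => n; case: (hxs n).
have u_eq : u = T \o xs by apply: funext => n; case: (hxs n).
by rewrite u_eq in ul; apply: (cvg_to_unique hip ul); apply: cvg_to_bounded_op.
Qed.

(* The orthogonal complement of [T M] in [M] lies in [ker T^* = ker T]. *)
Lemma normal_reducing_onto M : closed_subspace ip M -> reduces ip M T ->
  (forall x, M x -> adj ip T (T x) = T (adj ip T x)) ->
  forall y, M y -> exists x, M x /\ y = T x.
Proof.
move=> hM [MT MTs] normalT y My.
have [p [x [Mx px]] hp] := orthogonal_projection hip hcomp (image_closed_subspace hM) y.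
set z := y - p; have Mz : M z by apply: (subspaceB hM My); rewrite px; apply: MT.
have Tsz : adj ip T z = 0.
  apply: (sqnorm_eq0 hip); rewrite /sqnorm -(ip_adjr hip hcomp hT) (ipC hip) hp ?conjC0 //.
  by exists (adj ip T z); split=> //; apply: MTs.
have Tz : T z = 0.
  apply: (sqnorm_eq0 hip); rewrite /sqnorm (ip_adjr hip hcomp hT) normalT // Tsz.
  by rewrite (lin_op0 hT.1) (ip0r hip).
have z0 : z = 0.
  apply: (hnorm_eq0 hip); apply/eqP; rewrite eq_le hnorm_ge0 andbT.
  by rewrite -(pmulr_rle0 _ e0); have := T_bounded_below z; rewrite Tz (hnorm0 hip).
by exists x; split=> //; rewrite -px; apply/eqP; rewrite -subr_eq0 -/z z0.
Qed.

Theorem analytic_completely_non_normal : analytic T -> completely_non_normal ip T.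
Proof.
move=> anT M hM redM normalT y My; apply: anT => n.
suff [x [_ ->]] : exists x, M x /\ y = iter n T x by exists x.
elim: n => [|n [x [Mx ->]]]; first by exists y.
have [x' [Mx' ->]] := normal_reducing_onto hM redM normalT Mx.
by exists x'; rewrite iterSr.
Qed.

End CompletelyNonNormal.

(** * Paranormal operators with an expanded vector *)

Lemma bernoulli_ineq (R : realFieldType) (t : R) n : 0 <= t <= 1 -> 1 - n%:R * t <= (1 - t) ^+ n.
Proof.
case/andP=> t0 t1; elim: n => [|n IH]; first by rewrite mul0r subr0 expr0.
rewrite exprS -natr1.
have : (1 - t) * (1 - n%:R * t) <= (1 - t) * (1 - t) ^+ n by rewrite ler_wpM2l ?subr_ge0.
have : 0 <= n%:R * t * t by rewrite !mulr_ge0.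
nra.
Qed.

Lemma exists_ge_mean (R : realDomainType) K (F : 'I_K -> R) (S : R) : (0 < K)%N ->
  \sum_(j < K) F j = K%:R * S -> exists j, S <= F j.
Proof.
move=> K0 sumF; apply: contrapT => hlt.
have : \sum_(j < K) F j < \sum_(j < K) S.
  apply: ltr_sum => [|j _]; first by apply/hasP; exists (Ordinal K0); rewrite ?mem_index_enum.
  by rewrite ltNge; apply/negP => Sj; apply: hlt; exists j.
by rewrite sumF sumr_const card_ord mulr_natl ltxx.
Qed.

Section RootsOfUnity.
Variable R : realType.
Implicit Types z w : R[i].

Lemma complex_prim_root_exists n : (0 < n)%N -> exists z : R[i], n.-primitive_root z.
Proof.
move=> n_gt0; pose p : {poly R[i]} := 'X^n - 1; have [r Dp] := closed_field_poly_normal p.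
rewrite (monicP _) ?monicXnsubC // scale1r in Dp.
have rn1 : all n.-unity_root r by apply/allP=> z; rewrite -root_prod_XsubC -Dp.
have sz_r : (n < (size r).+1)%N by rewrite -(size_prod_XsubC r id) -Dp size_XnsubC.
have [|z] := hasP (cyclic.has_prim_root n_gt0 rn1 _ sz_r); last by exists z.
rewrite -separable.separable_prod_XsubC -Dp cyclotomic.separable_Xn_sub_1 //.
by rewrite pnatr_eq0 -lt0n.
Qed.

Lemma sum_root1_eq0 z n : z ^+ n = 1 -> z != 1 -> \sum_(j < n) z ^+ j = 0.
Proof.
move=> zn1 z1; have /esym/eqP := subrX1 z n.
by rewrite zn1 subrr mulf_eq0 subr_eq0 (negPf z1) => /eqP.
Qed.

Variable V : lmodType R[i].
Variable ip : V -> V -> R[i].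
Hypothesis hip : inner_product ip.

(* Orthogonality of the characters [k |-> w ^+ (j * k)] of [Z/K]. *)
Lemma parseval K w (v : 'I_K -> V) : K.-primitive_root w ->
  \sum_(j < K) ip (\sum_(k < K) (w ^+ j) ^+ k *: v k) (\sum_(l < K) (w ^+ j) ^+ l *: v l)
  = K%:R * \sum_(k < K) ip (v k) (v k).
Proof.
move=> pw; have K0 := prim_order_gt0 pw.
have wK m : (w ^+ m) ^+ K = 1 by rewrite exprAC (prim_expr_order pw) expr1n.
have unit_pow m : (w ^+ m)^* * w ^+ m = 1.
  by apply: normc1_conjM; rewrite normcX (normc_root1 K0 (prim_expr_order pw)) expr1n.
have expand j : ip (\sum_(k < K) (w ^+ j) ^+ k *: v k) (\sum_(l < K) (w ^+ j) ^+ l *: v l)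
    = \sum_(k < K) \sum_(l < K) (w ^+ k * (w ^+ l)^*) ^+ j * ip (v k) (v l).
  rewrite (ip_suml hip); apply: eq_bigr => k _.
  rewrite (ipZl hip) (ip_sumr hip) mulr_sumr; apply: eq_bigr => l _.
  rewrite (ipZr hip) mulrA exprMn -conjCX -!exprM.
  by rewrite [(j * k)%N]mulnC [(j * l)%N]mulnC.
under eq_bigr => j _ do rewrite expand.
rewrite exchange_big mulr_sumr; apply: eq_bigr => k _ /=.
rewrite exchange_big (bigD1 k) //= [X in _ + X]big1 ?addr0; last first.
  move=> l lk; rewrite -mulr_suml sum_root1_eq0 ?mul0r //.
    by rewrite exprMn -conjCX !wK conjC1 mulr1.
  apply: contra lk => /eqP kl; have : w ^+ k = w ^+ l.
    by rewrite -[w ^+ k]mulr1 -(unit_pow l) mulrA kl mul1r.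
  by move/eqP; rewrite (eq_prim_root_expr pw) !modn_small ?ltn_ord // eq_sym.
rewrite -mulr_suml [w ^+ k * _]mulrC unit_pow (eq_bigr (fun=> 1)) => [|j _].
  by rewrite sumr_const card_ord.
by rewrite expr1n.
Qed.

Lemma exists_fourier_ge K w (v : 'I_K -> V) : K.-primitive_root w -> exists j : 'I_K,
  \sum_(i < K) sqnorm ip (v i) <= sqnorm ip (\sum_(i < K) (w ^+ j) ^+ i *: v i).
Proof.
move=> pw; pose F (j : 'I_K) := sqnorm ip (\sum_(i < K) (w ^+ j) ^+ i *: v i).
apply: (@exists_ge_mean _ _ F _ (prim_order_gt0 pw)).
by have := congr1 (@complex.Re R) (parseval v pw); rewrite Re_sum Re_natM Re_sum.
Qed.

End RootsOfUnity.

Lemma bounded_seq_cluster (R : realType) (g : nat -> R) (M : R) : (forall k, `|g k| <= M) ->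
  exists c, forall e, 0 < e -> forall n, exists2 k, (n <= k)%N & `|g k - c| < e.
Proof.
move=> gM; pose E : set R := fun t => forall n, exists2 k, (n <= k)%N & t <= g k.
have EM : E (- M) by move=> n; exists n => //; have := gM n; rewrite ler_norml => /andP[].
have hE : has_sup E.
  split; first by exists (- M).
  by exists M => t Et; have [k _ tk] := Et 0%N; apply: le_trans tk (le_trans (ler_norm _) (gM k)).
exists (sup E) => e e0 n; have e2 : 0 < e / 2 by rewrite divr_gt0.
have [t Et supt] := sup_adherent e2 hE.
have [n0 above] : exists n0, forall k, (n0 <= k)%N -> g k < sup E + e / 2.
  apply: contrapT => hn; have : E (sup E + e / 2).
    move=> m; apply: contrapT => hm; apply: hn; exists m => k mk; rewrite ltNge.
    by apply/negP => gk; apply: hm; exists k.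
  by move/(sup_upper_bound hE); rewrite gerDl leNgt e2.
have [k nk tk] := Et (maxn n n0); exists k; first exact: leq_trans (leq_maxl _ _) nk.
have := above k (leq_trans (leq_maxr _ _) nk); rewrite ltr_distl; lra.
Qed.

Section UnitCircle.
Variable R : realType.
Implicit Types (f : nat -> R[i]) (z : R[i]).

Definition cluster_point f z :=
  forall e, 0 < e -> forall n, exists2 k, (n <= k)%N & normc (f k - z) < e.

Lemma normc1_Re z : normc z = 1 -> `|complex.Re z| <= 1.
Proof.
move=> z1; rewrite -(expr_le1 (ltn0Sn 1)) // real_normK ?num_real //.
by have := normc_sqrE z; rewrite z1 expr1n; have := sqr_ge0 (complex.Im z); lra.
Qed.

Lemma sqrB_le_normB_sqr (b y : R) : 0 <= b -> 0 <= y -> (b - y) ^+ 2 <= `|b ^+ 2 - y ^+ 2|.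
Proof.
move=> b0 y0; rewrite (_ : b ^+ 2 - y ^+ 2 = (b - y) * (b + y)); last by ring.
rewrite normrM -real_normK ?num_real // expr2 ler_wpM2l ?normr_ge0 //.
by rewrite (ger0_norm (addr_ge0 b0 y0)) (le_trans (ler_normB _ _)) // !ger0_norm.
Qed.

(* On the upper half circle [Im] is determined by [Re], so accumulation of [Re (f k)]
   transfers to [f k]. *)
Lemma upper_circle_cluster f (c y : R) : (forall k, normc (f k) = 1) ->
  `|c| <= 1 -> 0 <= y -> c ^+ 2 + y ^+ 2 = 1 ->
  (forall e, 0 < e -> forall n, exists k,
     [/\ (n <= k)%N, `|complex.Re (f k) - c| < e & 0 <= complex.Im (f k)]) ->
  cluster_point f (c +i* y)%C.
Proof.
move=> f1 c1 y0 cy H eta eta0 n.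
have y2 : y ^+ 2 = 1 - c ^+ 2 by rewrite -cy addrC addKr.
pose e := Num.min (eta / 2) (eta ^+ 2 / 4).
have e0 : 0 < e by rewrite lt_min !divr_gt0 ?exprn_gt0.
have e1 : e <= eta / 2 by rewrite ge_min lexx.
have e2 : e <= eta ^+ 2 / 4 by rewrite ge_min lexx orbT.
have [k [nk hre him]] := H e e0 n; exists k => //.
rewrite -(ltr_pXn2r (n := 2)) ?nnegrE ?normc_ge0 ?ltW // normc_sqrE.
have a1 := normc1_Re (f1 k); have := normc_sqrE (f k); rewrite f1 expr1n.
case: (f k) hre him a1 => a b /= hre him a1 hab.
have hca : `|c ^+ 2 - a ^+ 2| <= 2 * e.
  rewrite (_ : c ^+ 2 - a ^+ 2 = (c + a) * (c - a)); last by ring.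
  rewrite normrM ler_pM ?normr_ge0 //; last by rewrite distrC ltW.
  by apply: le_trans (ler_normD _ _) _; lra.
have hb := sqrB_le_normB_sqr him y0; rewrite y2 (_ : b ^+ 2 = 1 - a ^+ 2) in hb; last by lra.
rewrite (_ : 1 - a ^+ 2 - (1 - c ^+ 2) = c ^+ 2 - a ^+ 2) in hb; last by ring.
have ha : (a - c) ^+ 2 < e ^+ 2.
  by rewrite -real_normK ?num_real // ltr_pXn2r ?nnegrE ?normr_ge0 ?(ltW e0).
have : e ^+ 2 <= eta ^+ 2 / 4 by nra.
have : 0 < eta ^+ 2 by rewrite exprn_gt0.
lra.
Qed.

(* If [f] does not visit the upper half circle near [c] infinitely often, then [f^*] does. *)
Lemma unit_circle_cluster f : (forall k, normc (f k) = 1) ->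
  exists2 z, normc z = 1 & cluster_point f z.
Proof.
move=> f1; have [c hc] := bounded_seq_cluster (fun k => normc1_Re (f1 k)).
have c1 : `|c| <= 1.
  apply/ler_addgt0Pr => e e0; have [k _] := hc e e0 0%N.
  by rewrite distrC; have := lerB_dist c (complex.Re (f k)); have := normc1_Re (f1 k); lra.
have [y y0 cy] : exists2 y : R, 0 <= y & c ^+ 2 + y ^+ 2 = 1.
  have c2 : c ^+ 2 <= 1 by rewrite -real_normK ?num_real // expr_le1.
  exists (Num.sqrt (1 - c ^+ 2)); first exact: sqrtr_ge0.
  by rewrite sqr_sqrtr ?subr_ge0 // addrC subrK.
set z := (c +i* y)%C.
have z1 : normc z = 1.
  by rewrite -[normc z]ger0_norm ?normc_ge0 // -sqrtr_sqr normc_sqrE /= cy sqrtr1.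
have [up|not_up] := pselect (forall e, 0 < e -> forall n, exists k,
   [/\ (n <= k)%N, `|complex.Re (f k) - c| < e & 0 <= complex.Im (f k)]).
  by exists z => //; apply: upper_circle_cluster.
have [e1 e10 [n1 low]] : exists2 e1, 0 < e1 & exists n1, forall k, (n1 <= k)%N ->
    `|complex.Re (f k) - c| < e1 -> complex.Im (f k) < 0.
  apply: contrapT => h; apply: not_up => e e0 n; apply: contrapT => h'.
  apply: h; exists e => //; exists n => k nk hk; rewrite ltNge; apply/negP => Imk.
  by apply: h'; exists k.
have up' : forall e, 0 < e -> forall n, exists k,
    [/\ (n <= k)%N, `|complex.Re (f k)^* - c| < e & 0 <= complex.Im (f k)^*].
  move=> e e0 n; have m0 : 0 < Num.min e e1 by rewrite lt_min e0 e10.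
  have [k nk hk] := hc _ m0 (maxn n n1).
  rewrite lt_min in hk; case/andP: hk => hke hke1.
  exists k; rewrite ReJ ImJ oppr_ge0; split=> //; first exact: leq_trans (leq_maxl _ _) nk.
  by apply/ltW/(low k (leq_trans (leq_maxr _ _) nk)).
have fJ1 k : normc (f k)^* = 1 by rewrite normc_conj.
exists z^*; first by rewrite normc_conj.
move=> e e0 n; have [k nk hk] := upper_circle_cluster fJ1 c1 y0 cy up' e0 n.
by exists k => //; rewrite -normc_conj rmorphB /= conjCK.
Qed.

End UnitCircle.

Lemma geometric_telescope (K : pzRingType) (V : lmodType K) (B : V -> V) (d lam : K) u n :
  (forall a x y, B (a *: x + y) = a *: B x + B y) -> lam * d = 1 ->
  let W := \sum_(k < n.+1) d ^+ k *: iter k B u in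
  B W - lam *: W = d ^+ n *: iter n.+1 B u - lam *: u.
Proof.
move=> hB lamd; elim: n => [|n IH] /=; first by rewrite big_ord1 expr0 !scale1r.
rewrite big_ord_recr /= (lin_opD hB) (lin_opZ hB) scalerDr opprD addrACA IH.
have -> : lam *: (d ^+ n.+1 *: iter n.+1 B u) = d ^+ n *: iter n.+1 B u.
  by rewrite scalerA exprS mulrA lamd mul1r.
by rewrite -iterS addrC addrA subrK.
Qed.

Section ParanormalGrowth.
Variable R : realType.
Variable V : lmodType R[i].
Variable ip : V -> V -> R[i].
Hypothesis hip : inner_product ip.
Local Notation N := (hnorm ip).
Variable B : V -> V.
Hypothesis hB : bounded_op ip B.
Hypothesis paraB : paranormal ip B.
Variable x : V.
Hypothesis expand_x : N x < N (B x).

Let a k := N (iter k B x).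
Let r k := a k.+1 / a k.

Lemma iter_neq0 k : iter k B x != 0.
Proof.
have Bx0 : B x != 0.
  by apply: contraTneq expand_x => ->; rewrite (hnorm0 hip) -leNgt hnorm_ge0.
have BiterS j : B (iter j B x) != 0.
  elim: j => [|j IH] //; apply: contra_neq IH => /= BB0.
  apply: (hnorm_eq0 hip); apply/eqP; rewrite -sqrf_eq0 eq_le sqr_ge0 andbT.
  by have := paraB (iter j B x); rewrite BB0 (hnorm0 hip) mul0r.
case: k => [|k]; last exact: BiterS.
by apply: contra_neq Bx0 => /= ->; rewrite (lin_op0 hB.1).
Qed.

Let a_gt0 k : 0 < a k. Proof. exact: (hnorm_gt0 hip (iter_neq0 k)). Qed.

Let a_succ k : a k.+1 = r k * a k.
Proof. by rewrite /r mulfVK // gt_eqF. Qed.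

Let r_ge0 k : 0 <= r k.
Proof. by rewrite divr_ge0 ?ltW. Qed.

Let r_nondecreasing : {homo r : k m / (k <= m)%N >-> k <= m}.
Proof.
apply: (homo_leq (@lexx _ _) (@le_trans _ _)) => k.
by have := paraB (iter k B x); rewrite /r ler_pdivrMr // mulrAC ler_pdivlMr.
Qed.

Let L := sup (range r).

Let has_sup_r : has_sup (range r).
Proof.
split; first by exists (r 0), 0%N.
have [M _ hM] := bounded_op_pos hB; exists M => _ [k _ <-].
by rewrite /r ler_pdivrMr //; apply: hM.
Qed.

Let r_le_L k : r k <= L.
Proof. exact: sup_upper_bound has_sup_r _ (imageT r k). Qed.

Let L_gt1 : 1 < L.
Proof. by apply: lt_le_trans (r_le_L 0); rewrite /r ltr_pdivlMr // mul1r. Qed.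

Let L_gt0 : 0 < L.
Proof. exact: lt_trans ltr01 L_gt1. Qed.

Let grow_lo n j : r n ^+ j * a n <= a (j + n).
Proof.
elim: j => [|j IH]; first by rewrite expr0 mul1r.
rewrite addSn a_succ exprS -mulrA (le_trans (ler_wpM2l (r_ge0 n) IH)) //.
by rewrite ler_wpM2r ?(ltW (a_gt0 _)) // r_nondecreasing // leq_addl.
Qed.

Let grow_hi n j : a (j + n) <= L ^+ j * a n.
Proof.
elim: j => [|j IH]; first by rewrite expr0 mul1r.
rewrite addSn a_succ exprS -mulrA (le_trans (ler_wpM2r (ltW (a_gt0 _)) (r_le_L _))) //.
by rewrite ler_wpM2l ?(ltW L_gt0).
Qed.

(* Once [r n] is within [L / 4K] of its supremum, the first [K] normalised iterates
   [L ^- j * a (j + n)] keep at least [1 / sqrt 2] of [a n]: this is Bernoulli's inequality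
   for [q ^+ 2j] with [q = r n / L]. *)
Let iter_lower n j K : (j < K)%N -> 4 * K%:R * (L - r n) <= L ->
  a n ^+ 2 / 2 <= (L ^- j * a (j + n)) ^+ 2.
Proof.
move=> jK near; pose q := r n / L.
have q0 : 0 <= q by rewrite divr_ge0 ?(ltW L_gt0).
have q1 : q <= 1 by rewrite ler_pdivrMr // mul1r.
have jt : 4 * j%:R * (1 - q) <= 1.
  rewrite -(ler_pM2r L_gt0) mul1r.
  have -> : 4 * j%:R * (1 - q) * L = 4 * j%:R * (L - r n).
    by rewrite /q; field; apply: lt0r_neq0.
  apply: le_trans near; rewrite ler_wpM2r ?subr_ge0 ?r_le_L //.
  by rewrite ler_wpM2l ?ler0n // ler_nat ltnW.
have half : 2^-1 <= q ^+ (j * 2).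
  have t01 : 0 <= 1 - q <= 1 by apply/andP; split; lra.
  by have := bernoulli_ineq (2 * j) t01; rewrite subKr natrM mulnC; lra.
have lo : q ^+ j * a n <= L ^- j * a (j + n).
  have Lj : 0 <= L ^- j by rewrite invr_ge0 exprn_ge0 ?(ltW L_gt0).
  apply: le_trans (ler_wpM2l Lj (grow_lo n j)).
  by rewrite /q [(r n / L) ^+ j]exprMn exprVn [r n ^+ j * L ^- j]mulrC mulrA.
apply: le_trans (_ : (q ^+ j * a n) ^+ 2 <= _); last first.
  have lo0 : 0 <= q ^+ j * a n by rewrite mulr_ge0 ?exprn_ge0 ?(ltW (a_gt0 _)).
  by rewrite ler_pXn2r ?nnegrE ?lo0 ?(le_trans lo0 lo).
by rewrite exprMn -exprM mulrC ler_wpM2r ?sqr_ge0.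
Qed.

Let r_near_L K : (0 < K)%N -> exists n, 4 * K%:R * (L - r n) <= L.
Proof.
move=> K0; have d0 : 0 < L / (4 * K%:R) by rewrite divr_gt0 ?mulr_gt0 ?ltr0n.
have [_ [n _ <-] near] := sup_adherent d0 has_sup_r; exists n.
by rewrite -ler_pdivlMl ?mulr_gt0 ?ltr0n // mulrC; apply/ltW; rewrite ltrBlDr addrC -ltrBlDr.
Qed.

Let boundary_le n k (d lam : R[i]) : normc d = L^-1 -> normc lam = L ->
  N (d ^+ k *: iter k.+1 B (iter n B x) - lam *: iter n B x) <= 2 * L * a n.
Proof.
move=> nd nlam; apply: (le_trans (ler_hnormB hip _ _)).
rewrite !(hnormZ hip) normcX nd nlam -iterD.
have Lk0 : 0 <= L^-1 ^+ k by rewrite exprn_ge0 // invr_ge0 ltW.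
have := ler_wpM2l Lk0 (grow_hi n k.+1).
have -> : L^-1 ^+ k * (L ^+ k.+1 * a n) = L * a n.
  by rewrite exprVn exprS; field; rewrite expf_neq0 // lt0r_neq0.
by rewrite -/(a _) -/(a n); lra.
Qed.

(* A discrete Fourier transform of the first [k.+1] normalised iterates of [B] is an
   approximate eigenvector for an eigenvalue [L * z] with [|z| = 1]. *)
Let approx_eigenvector k : exists z, normc z = 1 /\
  exists2 w, w != 0 & sqnorm ip (B w - (L%:C * z) *: w) <= 8 * L ^+ 2 / k.+1%:R * sqnorm ip w.
Proof.
pose K := k.+1; have [om pom] := complex_prim_root_exists R (ltn0Sn k).
have [n near] := r_near_L (ltn0Sn k).
set u := iter n B x; pose v (j : 'I_K) := (L ^- j)%:C *: iter j B u.
have S_ge : K%:R * (a n ^+ 2 / 2) <= \sum_(j < K) sqnorm ip (v j).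
  have : \sum_(j < K) (a n ^+ 2 / 2) <= \sum_(j < K) sqnorm ip (v j).
    apply: ler_sum => j _; rewrite /v (sqnormZ hip) normc_real ger0_norm; last first.
      by rewrite invr_ge0 exprn_ge0 ?(ltW L_gt0).
    by rewrite -(hnorm_sqr hip) /u -iterD -exprMn; apply: iter_lower (ltn_ord j) near.
  by rewrite sumr_const card_ord mulr_natl.
have [j0 hj0] := exists_fourier_ge hip v pom; set W := \sum_(i < K) (_ *: _) in hj0.
pose c := om ^+ j0; pose d := c / L%:C; pose lam := L%:C / c.
have c1 : normc c = 1.
  by rewrite normcX (normc_root1 (ltn0Sn k) (prim_expr_order pom)) expr1n.
have c0 : c != 0 by rewrite -normc_gt0 c1.
have L0 : L%:C != 0 :> R[i] by rewrite -normc_gt0 normc_real gtr0_norm.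
have lamd : lam * d = 1 by rewrite /lam /d mulrA divfK // divff.
have WE : W = \sum_(i < K) d ^+ i *: iter i B u.
  by apply: eq_bigr => i _; rewrite /v scalerA /d exprMn exprVn fmorphV rmorphXn.
have tele := geometric_telescope u k hB.1 lamd; rewrite /= -WE in tele.
exists c^-1; split; first by rewrite normcV c1 invr1.
have Wpos : 0 < sqnorm ip W.
  apply: lt_le_trans hj0; apply: lt_le_trans S_ge.
  by rewrite mulr_gt0 // divr_gt0 // exprn_gt0.
exists W; first by apply: contraTneq Wpos => ->; rewrite (sqnorm0 hip) ltxx.
have nd : normc d = L^-1 by rewrite normcM c1 mul1r normcV normc_real gtr0_norm.
have nlam : normc lam = L by rewrite normcM normcV c1 invr1 mulr1 normc_real gtr0_norm.
rewrite -/lam tele -(hnorm_sqr hip).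
apply: (@le_trans _ _ ((2 * L * a n) ^+ 2)).
  rewrite ler_pXn2r ?nnegrE ?hnorm_ge0 ?mulr_ge0 ?(ltW L_gt0) ?(ltW (a_gt0 n)) //.
  exact: boundary_le.
have -> : (2 * L * a n) ^+ 2 = 8 * L ^+ 2 / K%:R * (K%:R * (a n ^+ 2 / 2)).
  by field; rewrite lt0r_neq0.
rewrite ler_wpM2l ?divr_ge0 ?mulr_ge0 ?sqr_ge0 ?ler0n ?(ltW L_gt0) //.
exact: (le_trans S_ge hj0).
Qed.

Theorem paranormal_ap_spectrum_gt1 : exists mu, 1 < normc mu /\ ap_spectrum ip B mu.
Proof.
have [zf hzf] := choice approx_eigenvector.
have [z z1 clz] := unit_circle_cluster (fun k => (hzf k).1).
exists (L%:C * z); split; first by rewrite normcM normc_real gtr0_norm // z1 mulr1.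
apply/(ap_spectrumP hip _ hB.1) => e e0.
have e2 : 0 < e / 2 by rewrite divr_gt0.
have L8 : 0 < 8 * L ^+ 2 by rewrite mulr_gt0 ?exprn_gt0.
have [K hK] := exists_inv_lt (divr_gt0 (exprn_gt0 2 e2) L8).
have [k Kk hk] := clz _ (divr_gt0 e2 L_gt0) K.
have [_ [w w0 hw]] := hzf k; exists w => //.
have Nw := hnorm_gt0 hip w0.
have small : 8 * L ^+ 2 / k.+1%:R < (e / 2) ^+ 2.
  have kK : k.+1%:R^-1 <= K.+1%:R^-1 :> R by rewrite lef_pV2 ?posrE ?ltr0Sn // ler_nat ltnS.
  have := le_lt_trans kK hK.
  by rewrite ltr_pdivlMr ?mulr_gt0 ?exprn_gt0 ?ltr0Sn // mulrC.
have near_k : N (B w - (L%:C * zf k) *: w) < e / 2 * N w.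
  rewrite -(ltr_pXn2r (n := 2)) ?nnegrE ?hnorm_ge0 ?(mulr_ge0 (ltW e2) (ltW Nw)) //.
  rewrite exprMn !(hnorm_sqr hip); apply: (le_lt_trans hw); rewrite ltr_pM2r //.
  by rewrite -(hnorm_sqr hip) exprn_gt0.
have near_z : N ((L%:C * zf k - L%:C * z) *: w) < e / 2 * N w.
  rewrite (hnormZ hip) -mulrBr normcM normc_real gtr0_norm // ltr_pM2r //.
  by rewrite mulrC -ltr_pdivlMr.
have -> : B w - (L%:C * z) *: w = (B w - (L%:C * zf k) *: w) + (L%:C * zf k - L%:C * z) *: w.
  by rewrite scalerBl addrA subrK.
apply: le_lt_trans (ler_hnormD hip _ _) _.
by rewrite [e]splitr mulrDl ltrD.
Qed.

End ParanormalGrowth.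

(** * Invertible operators *)

Section InvertibleCase.
Variable R : realType.
Variable V : lmodType R[i].
Variable ip : V -> V -> R[i].
Hypothesis hip : inner_product ip.
Hypothesis hcomp : complete ip.
Local Notation N := (hnorm ip).

Lemma is_inverse_adj T S : bounded_op ip T -> is_inverse ip T S ->
  is_inverse ip (adj ip T) (adj ip S).
Proof.
move=> hT [hS [ST TS]]; split; first exact: adj_bounded.
split=> y; apply: (ip_inj_r hip) => x.
  by rewrite -(ip_adjr hip hcomp hS) -(ip_adjr hip hcomp hT) TS.
by rewrite -(ip_adjr hip hcomp hT) -(ip_adjr hip hcomp hS) ST.
Qed.

Lemma Tprime_inverse T S : bounded_op ip T -> is_inverse ip T S -> Tprime ip T = adj ip S.
Proof.
move=> hT hTS; have [hS [ST TS]] := hTS; have [_ [AsAt AtAs]] := is_inverse_adj hT hTS.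
have inv : is_inverse ip (adj ip T \o T) (S \o adj ip S).
  split; first exact/bounded_op_comp/adj_bounded.
  by split=> y /=; rewrite ?AsAt ?ST // TS AtAs.
by apply: funext => y; rewrite /Tprime /= (inv_opE inv) /= TS.
Qed.

Lemma Hu_surjective (X : Type) (A B : X -> X) : (forall y, A (B y) = y) -> forall y, Hu A y.
Proof.
move=> AB y n; exists (iter n B y); elim: n => [|n IH] //.
by rewrite iterSr iterS AB.
Qed.

Lemma hyponormal_restr_full M A A' : (forall x, M x) ->
  (forall x y, ip (A x) y = ip x (A' y)) -> hyponormal_restr ip M A ->
  forall x, N (A' x) <= N (A x).
Proof.
move=> Mall adjA [_ [S [_ [adjS hpos]]]] x.
have SA' y : S y = A' y by apply: (ip_inj_r hip) => z; rewrite -adjS // adjA.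
have := hpos x (Mall x); rewrite !SA' (ipBl hip) (ipC hip x) -adjA (adjA (A' x)).
by rewrite !(ipxxE hip) conjC_real -rmorphB lecR subr_ge0 => /(ler_hnorm hip).
Qed.

Lemma isometry_adjK A A' : lin_op A -> (forall x y, ip (A x) y = ip x (A' y)) ->
  (forall x, N (A x) = N x) -> forall x, A' (A x) = x.
Proof.
move=> hA adjA isoA x; apply: (Re_ip_inj_r hip) => z; rewrite -adjA.
have sq y : sqnorm ip (A y) = sqnorm ip y by rewrite -!(hnorm_sqr hip) isoA.
have := sqnormD hip (A z) (A x); rewrite -(lin_opD hA) !sq (sqnormD hip); lra.
Qed.

Variable T : V -> V.
Hypothesis hT : bounded_op ip T.
Hypothesis hap : forall lam, ap_spectrum ip T lam -> `|lam| = 1.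
Variable S : V -> V.
Hypothesis TS_inv : is_inverse ip T S.

Let A := adj ip S.
Let Ts := adj ip T.

Let hS : bounded_op ip S. Proof. by case: TS_inv. Qed.
Let ST x : S (T x) = x. Proof. by case: TS_inv => _ []. Qed.
Let TS x : T (S x) = x. Proof. by case: TS_inv => _ []. Qed.
Let hA : bounded_op ip A. Proof. exact: adj_bounded. Qed.
Let adjA x y : ip (A x) y = ip x (S y). Proof. exact: ip_adjl. Qed.
Let ATs y : A (Ts y) = y. Proof. by have [_ [? _]] := is_inverse_adj hT TS_inv. Qed.
Let TsA y : Ts (A y) = y. Proof. by have [_ [_ ?]] := is_inverse_adj hT TS_inv. Qed.

Hypothesis hyp : hyponormal_restr ip (Hu (Tprime ip T)) (Tprime ip T).

Let hypoA x : N (S x) <= N (A x).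
Proof.
apply: (hyponormal_restr_full (Hu_surjective ATs) adjA).
by move: hyp; rewrite (Tprime_inverse hT TS_inv).
Qed.

Let paraA : paranormal ip A. Proof. exact: (hyponormal_paranormal hip adjA hypoA). Qed.

Let paraTs : paranormal ip Ts. Proof. exact: (paranormal_inverse paraA ATs). Qed.

(* An approximate eigenvalue [mu] of [A = T^*^-1] gives the approximate eigenvalue
   [mu^*^-1] of [T], through [S = A^*] by hyponormality. *)
Let ap_A_unit mu : mu != 0 -> ap_spectrum ip A mu -> normc mu = 1.
Proof.
move=> mu0 /(ap_spectrum_hyponormal_adj hip adjA hypoA) apS.
have mu0' : mu^* != 0 by rewrite conjC_eq0.
have /hap/eqP := ap_spectrum_left_inverse hip hS.1 hT TS mu0' apS.
by rewrite normr_eq1 normcV normc_conj invr_eq1 => /eqP.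
Qed.

Let A_isometry x : N (A x) = N x.
Proof.
have hTs : bounded_op ip Ts by apply: adj_bounded.
have [lt|gt|//] := ltgtP (N (A x)) (N x).
  have lt' : N (A x) < N (Ts (A x)) by rewrite TsA.
  have [lam [lam1 aplam]] := paranormal_ap_spectrum_gt1 hip hTs paraTs lt'.
  have lam0 : lam != 0 by rewrite -normc_gt0 (lt_trans ltr01).
  have := ap_A_unit (invr_neq0 lam0) (ap_spectrum_left_inverse hip hTs.1 hA ATs lam0 aplam).
  by rewrite normcV => /eqP; rewrite invr_eq1 => /eqP lam_eq; rewrite lam_eq ltxx in lam1.
have [mu [mu1 apmu]] := paranormal_ap_spectrum_gt1 hip hA paraA gt.
have mu0 : mu != 0 by rewrite -normc_gt0 (lt_trans ltr01).
by move: mu1; rewrite (ap_A_unit mu0 apmu) ltxx.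
Qed.

Theorem invertible_unitary : unitary ip T.
Proof.
have SA := isometry_adjK hA.1 adjA A_isometry.
have STs y : S y = adj ip T y by rewrite -[in LHS](ATs y) SA.
by split=> y; rewrite -STs ?ST ?TS.
Qed.

End InvertibleCase.

Theorem proposition2p4 (R : realType) (V : lmodType R[i]) (ip : V -> V -> R[i])
  (hip : inner_product ip) (hcomp : complete ip) (T : V -> V)
  (hT : bounded_op ip T)
  (hap : forall lam : R[i], ap_spectrum ip T lam -> `|lam| = 1)
  (hhyp : hyponormal_restr ip (Hu (Tprime ip T)) (Tprime ip T)) :
  (invertible ip T -> unitary ip T) /\
  (analytic T -> completely_non_normal ip T).
Proof.
split; first by case=> S TS_inv; apply: (invertible_unitary hip hcomp hT hap TS_inv hhyp).
have not_ap0 : ~ ap_spectrum ip T 0 by move/hap/eqP; rewrite normr0 eq_sym oner_eq0.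
have [e e0 Te] := bounded_below_of_not_ap hip hT.1 not_ap0.
apply: (analytic_completely_non_normal hip hcomp hT e0) => x.
by have := Te x; rewrite scale0r subr0.
Qed.
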